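(* For $k\ge0$ let $B_k$ be the family of bar $k$-visibility graphs and $A_k$ the family of arc $k$-visibility graphs. Then $A_j\not\subseteq B_i$ for all $i,j\ge 0$.
   Context: A bar $k$-visibility representation is a finite collection of pairwise disjoint closed horizontal line segments (bars) in the plane; two bars are adjacent if there is a vertical segment with endpoints on the two bars intersecting at most $k$ other bars. An arc $k$-visibility representation is a finite collection of pairwise disjoint circular arcs centered at a common point $O$; two arcs are adjacent if there is a segment contained in a line through $O$ (possibly passing through $O$) with endpoints on the two arcs intersecting at most $k$ other arcs (an arc met twice by the radial line counted once). In each case the graph has one vertex per bar/arc and the stated adjacency. *)

From Stdlib Require Import Reals List Arith.
Open Scope R_scope.

Definition pt := (R * R)%type.

Definition seg (p q z : pt) : Prop :=
  exists t, 0 <= t <= 1 /\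
    z = ((1 - t) * fst p + t * fst q, (1 - t) * snd p + t * snd q).

Definition meets (S : pt -> Prop) (p q : pt) : Prop :=
  exists z, seg p q z /\ S z.

Record bar := Bar { bl : R; br : R; bh : R }.
Definition bar_valid (b : bar) : Prop := bl b < br b.
Definition on_bar (b : bar) (p : pt) : Prop :=
  bl b <= fst p <= br b /\ snd p = bh b.

Record arc := Arc { ar : R; aa : R; ab : R }.
Definition arc_valid (a : arc) : Prop :=
  0 < ar a /\ aa a < ab a < aa a + 2 * PI.
Definition on_arc (a : arc) (p : pt) : Prop :=
  exists t, aa a <= t <= ab a /\ p = (ar a * cos t, ar a * sin t).

(* Objects are indexed by vertices 0..n-1; [shape u] is the point set of
   object u.  Pairwise disjointness: *)
Definition pairwise_disjoint (n : nat) (shape : nat -> pt -> Prop) : Prop :=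
  forall u v, (u < n)%nat -> (v < n)%nat -> u <> v ->
    forall z, ~ (shape u z /\ shape v z).

(* u and v are k-visible: there is an admissible segment with endpoints on
   the two objects meeting at most k other objects (each object counted
   once, whatever the number of intersection points). *)
Definition k_visible (okseg : pt -> pt -> Prop) (n : nat)
    (shape : nat -> pt -> Prop) (k u v : nat) : Prop :=
  exists p q, shape u p /\ shape v q /\ okseg p q /\
    exists S : list nat, (length S <= k)%nat /\
      forall w, (w < n)%nat -> w <> u -> w <> v ->
        meets (shape w) p q -> In w S.

Definition vertical (p q : pt) : Prop := fst p = fst q.
(* segment contained in a line through O (possibly passing through O) *)
Definition radial (p q : pt) : Prop := fst p * snd q - snd p * fst q = 0.

(* A graph on vertex set {0,..,n-1} is given by an adjacency relation
   (only pairs of distinct vertices < n matter). *)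

Definition bar_k_vis_graph (k n : nat) (adj : nat -> nat -> Prop) : Prop :=
  exists B : nat -> bar,
    (forall u, (u < n)%nat -> bar_valid (B u)) /\
    pairwise_disjoint n (fun u => on_bar (B u)) /\
    forall u v, (u < n)%nat -> (v < n)%nat -> u <> v ->
      (adj u v <-> k_visible vertical n (fun w => on_bar (B w)) k u v).

Definition arc_k_vis_graph (k n : nat) (adj : nat -> nat -> Prop) : Prop :=
  exists A : nat -> arc,
    (forall u, (u < n)%nat -> arc_valid (A u)) /\
    pairwise_disjoint n (fun u => on_arc (A u)) /\
    forall u v, (u < n)%nat -> (v < n)%nat -> u <> v ->
      (adj u v <-> k_visible radial n (fun w => on_arc (A w)) k u v).

(* For i = 0 the witness is K5.  Five concentric arcs can be placed so that
   every pair is joined by a radial segment missing all other arcs, so K5 is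
   an arc j-visibility graph for every j.  With bars, list them by height
   b1 < ... < b5: the unobstructed vertical sightlines b1b3, b2b4, b3b5, b1b4
   and b2b5 must avoid the projections of the intermediate bars, which no
   five intervals of the line allow.

   For i >= 1 the witness is the 4-cycle, realised by arcs in overlapping
   angular sectors where opposite arcs share no radial line.  With four bars,
   an invisible pair whose projections overlap must have both other bars
   strictly between them there; this cannot hold for both opposite pairs, and
   if neither opposite pair overlaps, the four projections would be intervals
   forming an induced 4-cycle. *)
From Stdlib Require Import Reals Lra Lia ZArith List Permutation Sorting Classical.
Import ListNotations.
Open Scope R_scope.

Definition between (x a b : R) : Prop := a <= x <= b \/ b <= x <= a.

Lemma between_convex a b t : 0 <= t <= 1 -> between ((1 - t) * a + t * b) a b.
Proof. intros Ht; destruct (Rle_dec a b); [left | right]; split; nra. Qed.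

Lemma between_strict x a b :
  between x a b -> x <> a -> x <> b -> a < x < b \/ b < x < a.
Proof.
  unfold between; intros Hx Ha Hb.
  destruct (Rtotal_order x a) as [? | [? | ?]]; [| contradiction |];
  destruct (Rtotal_order x b) as [? | [? | ?]]; try contradiction; lra.
Qed.

Lemma seg_sym p q z : seg p q z -> seg q p z.
Proof. intros [t [Ht ->]]; exists (1 - t); split; [lra | f_equal; ring]. Qed.

Lemma k_visible_sym (okseg : pt -> pt -> Prop) n shape k u v :
  (forall p q, okseg p q -> okseg q p) ->
  k_visible okseg n shape k u v -> k_visible okseg n shape k v u.
Proof.
  intros Hok [p [q [Hp [Hq [Hpq [S [HS Hblock]]]]]]].
  exists q, p; repeat split; auto.
  exists S; split; [exact HS |].
  intros w Hw Hwv Hwu [z [Hz Hwz]]; apply Hblock; auto.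
  exists z; split; [apply seg_sym |]; auto.
Qed.

Lemma IZR_small_cases (k : Z) :
  -3 < IZR k < 3 -> IZR k = -2 \/ IZR k = -1 \/ IZR k = 0 \/ IZR k = 1 \/ IZR k = 2.
Proof.
  intros [Hlo Hhi]; apply lt_IZR in Hlo, Hhi.
  assert (Hk : (k = -2 \/ k = -1 \/ k = 0 \/ k = 1 \/ k = 2)%Z) by lia.
  destruct Hk as [-> | [-> | [-> | [-> | ->]]]]; simpl; lra.
Qed.

(** * Arcs *)

(* Angles are measured in units of [PI]; the radius [a] is signed, so the
   segment from [polar a θ] to [polar b θ] may pass through [O]. *)
Definition polar (a θ : R) : pt := (a * cos (θ * PI), a * sin (θ * PI)).

Lemma radial_polar a b θ : radial (polar a θ) (polar b θ).
Proof. unfold radial, polar; simpl; ring. Qed.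

Lemma radial_sym p q : radial p q -> radial q p.
Proof. unfold radial; lra. Qed.

Lemma polar_opp r θ : polar (- r) θ = polar r (θ + 1).
Proof.
  unfold polar; replace ((θ + 1) * PI) with (θ * PI + PI) by ring.
  rewrite neg_cos, neg_sin; f_equal; ring.
Qed.

Lemma polar_sub2 r θ : polar r θ = polar r (θ - 2).
Proof.
  unfold polar; replace ((θ - 2) * PI) with (θ * PI - 2 * PI) by ring.
  rewrite cos_minus, sin_minus, cos_2PI, sin_2PI; f_equal; ring.
Qed.

Lemma on_arc_polar r α β θ :
  α <= θ <= β -> on_arc (Arc r (α * PI) (β * PI)) (polar r θ).
Proof. intros Hθ; pose proof PI_RGT_0; exists (θ * PI); split; [simpl; split; nra | reflexivity]. Qed.

Lemma on_arc_norm a z : on_arc a z -> fst z * fst z + snd z * snd z = ar a * ar a.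
Proof. intros [s [_ ->]]; simpl; pose proof (sin2_cos2 s); unfold Rsqr in *; nra. Qed.

Lemma cos_eq_1_period d : cos d = 1 -> exists k : Z, d = 2 * IZR k * PI.
Proof.
  intros Hd.
  assert (Hs : sin (d / 2) = 0).
  { pose proof (cos_2a_sin (d / 2)) as E; replace (2 * (d / 2)) with d in E by field; nra. }
  destruct (sin_eq_0_0 _ Hs) as [k Hk]; exists k; lra.
Qed.

Lemma circle_point_polar r s l θ :
  0 < r -> (r * cos s, r * sin s) = polar l θ ->
  (exists k : Z, s = (θ + 2 * IZR k) * PI /\ l = r) \/
  (exists k : Z, s = (θ + 1 + 2 * IZR k) * PI /\ l = - r).
Proof.
  intros Hr E; unfold polar in E; injection E as E1 E2.
  set (c := cos (θ * PI)) in *; set (si := sin (θ * PI)) in *.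
  assert (Hcs : si * si + c * c = 1).
  { pose proof (sin2_cos2 (θ * PI)); unfold Rsqr in *; unfold c, si; lra. }
  assert (Hcos : r * cos (s - θ * PI) = l).
  { rewrite cos_minus; fold c si.
    replace (r * (cos s * c + sin s * si)) with (r * cos s * c + r * sin s * si) by ring.
    rewrite E1, E2; replace l with (l * (si * si + c * c)) at 3 by (rewrite Hcs; ring); ring. }
  assert (Hsin : sin (s - θ * PI) = 0).
  { rewrite sin_minus; fold c si; apply Rmult_eq_reg_l with r; [| lra].
    replace (r * (sin s * c - cos s * si)) with (r * sin s * c - r * cos s * si) by ring.
    rewrite E1, E2; ring. }
  assert (Hpm : cos (s - θ * PI) = 1 \/ cos (s - θ * PI) = -1).
  { pose proof (sin2_cos2 (s - θ * PI)) as P; unfold Rsqr in P; rewrite Hsin in P.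
    assert (Hf : (cos (s - θ * PI) - 1) * (cos (s - θ * PI) + 1) = 0) by nra.
    apply Rmult_integral in Hf; lra. }
  destruct Hpm as [Hc | Hc].
  - left; destruct (cos_eq_1_period _ Hc) as [k Hk]; exists k; split; [lra | nra].
  - right.
    assert (Hc' : cos (s - θ * PI - PI) = 1).
    { pose proof (neg_cos (s - θ * PI - PI)) as N.
      replace (s - θ * PI - PI + PI) with (s - θ * PI) in N by ring; lra. }
    destruct (cos_eq_1_period _ Hc') as [k Hk]; exists k; split; [lra | nra].
Qed.

Lemma polar_segment_meets_arc r α β a b θ :
  0 < r ->
  meets (on_arc (Arc r (α * PI) (β * PI))) (polar a θ) (polar b θ) ->
  (exists k : Z, α <= θ + 2 * IZR k <= β /\ between r a b) \/
  (exists k : Z, α <= θ + 1 + 2 * IZR k <= β /\ between (- r) a b).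
Proof.
  intros Hr [z [[t [Ht Hz]] [s [Hs Hsz]]]]; simpl in Hs, Hsz.
  pose proof PI_RGT_0.
  assert (Hl : (r * cos s, r * sin s) = polar ((1 - t) * a + t * b) θ).
  { rewrite <- Hsz, Hz; unfold polar; simpl; f_equal; ring. }
  pose proof (between_convex a b t Ht) as Hab.
  destruct (circle_point_polar _ _ _ _ Hr Hl) as [[k [Hk Hlr]] | [k [Hk Hlr]]];
    rewrite Hk in Hs; rewrite Hlr in Hab; [left | right]; exists k;
    (split; [split; apply Rmult_le_reg_r with PI; lra | exact Hab]).
Qed.

Lemma radial_arc_points_aligned r1 α1 β1 r2 α2 β2 p q :
  on_arc (Arc r1 (α1 * PI) (β1 * PI)) p -> on_arc (Arc r2 (α2 * PI) (β2 * PI)) q ->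
  0 < r1 -> 0 < r2 -> radial p q -> exists k : Z, α2 - β1 <= IZR k <= β2 - α1.
Proof.
  intros [s [Hs ->]] [s' [Hs' ->]] H1 H2; unfold radial; simpl in *; intros E.
  pose proof PI_RGT_0.
  assert (E' : r1 * r2 * sin (s' - s) = 0) by (rewrite sin_minus; lra).
  assert (Z : sin (s' - s) = 0).
  { apply Rmult_integral in E'; destruct E' as [E' | E']; [| exact E'].
    apply Rmult_integral in E'; lra. }
  destruct (sin_eq_0_0 _ Z) as [k Hk]; exists k.
  split; apply Rmult_le_reg_r with PI; lra.
Qed.

Lemma k_visible_polar n (shape : nat -> pt -> Prop) k u v a b θ :
  shape u (polar a θ) -> shape v (polar b θ) ->
  (forall w, (w < n)%nat -> w <> u -> w <> v -> ~ meets (shape w) (polar a θ) (polar b θ)) ->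
  k_visible radial n shape k u v.
Proof.
  intros Hu Hv Hfree; exists (polar a θ), (polar b θ).
  repeat split; auto using radial_polar.
  exists []; split; [simpl; lia |].
  intros w Hw Hwu Hwv Hm; exfalso; exact (Hfree w Hw Hwu Hwv Hm).
Qed.

Lemma arc_k_vis_graph_intro k n (A : nat -> arc) (adj : nat -> nat -> Prop) :
  (forall u, (u < n)%nat -> arc_valid (A u)) ->
  (forall u v, (u < n)%nat -> (v < n)%nat -> u <> v -> ar (A u) <> ar (A v)) ->
  (forall u v, adj u v -> adj v u) ->
  (forall u v, (u < v < n)%nat -> adj u v <-> k_visible radial n (fun w => on_arc (A w)) k u v) ->
  arc_k_vis_graph k n adj.
Proof.
  intros Hval Hradii Hsym Hadj; exists A; split; [exact Hval | split].
  - intros u v Hu Hv Huv z [Hzu Hzv].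
    apply on_arc_norm in Hzu, Hzv.
    destruct (Hval u Hu) as [Hru _]; destruct (Hval v Hv) as [Hrv _].
    apply (Hradii u v Hu Hv Huv); nra.
  - intros u v Hu Hv Huv.
    destruct (Nat.lt_total u v) as [Hlt | [Heq | Hgt]]; [apply Hadj; lia | lia |].
    split; intros H.
    + apply k_visible_sym; [exact radial_sym |]; apply Hadj; [lia | auto].
    + apply Hsym, Hadj; [lia |]; apply k_visible_sym; [exact radial_sym | exact H].
Qed.

Ltac on_arc_polar_tac :=
  simpl; rewrite ?polar_opp;
  first [apply on_arc_polar; lra | rewrite polar_sub2; apply on_arc_polar; lra].

Ltac arc_misses_segment_tac :=
  let Hm := fresh "Hm" in let m := fresh "m" in
  intro Hm; apply polar_segment_meets_arc in Hm; [| lra];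
  destruct Hm as [[m Hm] | [m Hm]]; unfold between in Hm;
  first [lra | pose proof (IZR_small_cases m ltac:(lra)); lra].

Definition K5_arcs (w : nat) : arc :=
  match w with
  | 0%nat => Arc 1 (5/100 * PI) (66/100 * PI)
  | 1%nat => Arc (11/10) (70/100 * PI) (130/100 * PI)
  | 2%nat => Arc (12/10) (140/100 * PI) (195/100 * PI)
  | 3%nat => Arc 2 (-125/100 * PI) (62/100 * PI)
  | _ => Arc 3 (58/100 * PI) (78/100 * PI)
  end.

Lemma K5_arcs_visible k u v :
  (u < v < 5)%nat -> k_visible radial 5 (fun w => on_arc (K5_arcs w)) k u v.
Proof.
  intros Huv; pose proof PI_RGT_0.
  destruct u as [|[|[|[|[|u]]]]]; destruct v as [|[|[|[|[|v]]]]]; try lia;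
  [ apply (k_visible_polar _ _ _ _ _ 1 (- (11/10)) (2/10))
  | apply (k_visible_polar _ _ _ _ _ 1 (- (12/10)) (5/10))
  | apply (k_visible_polar _ _ _ _ _ 1 2 (3/10))
  | apply (k_visible_polar _ _ _ _ _ 1 3 (64/100))
  | apply (k_visible_polar _ _ _ _ _ (11/10) (- (12/10)) (8/10))
  | apply (k_visible_polar _ _ _ _ _ (11/10) 2 1)
  | apply (k_visible_polar _ _ _ _ _ (11/10) 3 (72/100))
  | apply (k_visible_polar _ _ _ _ _ (12/10) 2 (16/10))
  | apply (k_visible_polar _ _ _ _ _ (12/10) (- (3)) (168/100))
  | apply (k_visible_polar _ _ _ _ _ 2 3 (6/10)) ];
  try on_arc_polar_tac;
  intros w Hw Hwu Hwv; destruct w as [|[|[|[|[|w]]]]]; try lia; simpl;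
  arc_misses_segment_tac.
Qed.

Lemma K5_arc_k_vis_graph k : arc_k_vis_graph k 5 (fun _ _ => True).
Proof.
  pose proof PI_RGT_0.
  apply arc_k_vis_graph_intro with K5_arcs; auto.
  - intros u Hu; destruct u as [|[|[|[|[|u]]]]]; try lia; unfold arc_valid; simpl; lra.
  - intros u v Hu Hv Huv.
    destruct u as [|[|[|[|[|u]]]]]; destruct v as [|[|[|[|[|v]]]]]; try lia; simpl; lra.
  - intros u v Huv; split; [intros _; apply K5_arcs_visible; exact Huv | auto].
Qed.

Definition C4_adj (u v : nat) : Prop := Nat.even u <> Nat.even v.

Definition C4_arcs (w : nat) : arc :=
  match w with
  | 0%nat => Arc 1 (0 * PI) (30/100 * PI)
  | 1%nat => Arc 2 (25/100 * PI) (60/100 * PI)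
  | 2%nat => Arc 3 (55/100 * PI) (90/100 * PI)
  | _ => Arc 4 (85/100 * PI) (110/100 * PI)
  end.

Lemma C4_arcs_visibility k u v :
  (u < v < 4)%nat -> C4_adj u v <-> k_visible radial 4 (fun w => on_arc (C4_arcs w)) k u v.
Proof.
  intros Huv; pose proof PI_RGT_0; unfold C4_adj.
  destruct u as [|[|[|[|u]]]]; destruct v as [|[|[|[|v]]]]; try lia; simpl;
  try (split; [intros; exfalso; auto |]; intros [p [q [Hp [Hq [Hpq _]]]]];
       destruct (radial_arc_points_aligned _ _ _ _ _ _ p q Hp Hq ltac:(lra) ltac:(lra) Hpq)
         as [m Hm];
       pose proof (IZR_small_cases m ltac:(lra)); lra);
  (split; [intros _ | intros _; discriminate]);
  [ apply (k_visible_polar _ _ _ _ _ 1 2 (27/100))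
  | apply (k_visible_polar _ _ _ _ _ 1 (- (4)) (5/100))
  | apply (k_visible_polar _ _ _ _ _ 2 3 (58/100))
  | apply (k_visible_polar _ _ _ _ _ 3 4 (87/100)) ];
  try on_arc_polar_tac;
  intros w Hw Hwu Hwv; destruct w as [|[|[|[|w]]]]; try lia; simpl;
  arc_misses_segment_tac.
Qed.

Lemma C4_arc_k_vis_graph k : arc_k_vis_graph k 4 C4_adj.
Proof.
  pose proof PI_RGT_0.
  apply arc_k_vis_graph_intro with C4_arcs.
  - intros u Hu; destruct u as [|[|[|[|u]]]]; try lia; unfold arc_valid; simpl; lra.
  - intros u v Hu Hv Huv.
    destruct u as [|[|[|[|u]]]]; destruct v as [|[|[|[|v]]]]; try lia; simpl; lra.
  - unfold C4_adj; auto.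
  - exact (C4_arcs_visibility k).
Qed.

(** * Bars *)

Notation bar_shapes B := (fun w : nat => on_bar (B w)).

Definition spans (b : bar) (x : R) : Prop := bl b <= x <= br b.

Lemma meets_vertical_bar b x y1 y2 :
  meets (on_bar b) (x, y1) (x, y2) -> spans b x /\ between (bh b) y1 y2.
Proof.
  intros [z [[t [Ht ->]] [Hx Hy]]]; simpl in Hx, Hy.
  replace ((1 - t) * x + t * x) with x in Hx by ring.
  split; [exact Hx | rewrite <- Hy; apply between_convex, Ht].
Qed.

Lemma meets_vertical_bar_intro b x y1 y2 :
  spans b x -> y1 < bh b < y2 -> meets (on_bar b) (x, y1) (x, y2).
Proof.
  intros Hx Hy; exists (x, bh b); split; [| split; [exact Hx | reflexivity]].
  set (t := (bh b - y1) / (y2 - y1)).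
  assert (Ht : t * (y2 - y1) = bh b - y1) by (unfold t; field; lra).
  exists t; split; [split; nra | simpl; f_equal; [ring | nra]].
Qed.

Lemma k_visible_vertical_common_x n B k u v :
  k_visible vertical n (bar_shapes B) k u v -> exists x, spans (B u) x /\ spans (B v) x.
Proof.
  intros [p [q [[Hp _] [[Hq _] [Hpq _]]]]]; unfold vertical in Hpq.
  exists (fst p); split; [exact Hp | rewrite Hpq; exact Hq].
Qed.

Lemma disjoint_bars_heights n B u v x :
  pairwise_disjoint n (bar_shapes B) -> (u < n)%nat -> (v < n)%nat -> u <> v ->
  spans (B u) x -> spans (B v) x -> bh (B u) <> bh (B v).
Proof.
  intros Hdisj Hu Hv Huv Hxu Hxv E.
  apply (Hdisj u v Hu Hv Huv (x, bh (B u))); split; split; simpl; auto.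
Qed.

Lemma bars_apart b c :
  bar_valid b -> bar_valid c -> ~ (exists x, spans b x /\ spans c x) ->
  br b < bl c \/ br c < bl b.
Proof.
  unfold bar_valid, spans; intros Hb Hc Hno.
  destruct (Rlt_le_dec (br b) (bl c)); [left; assumption |].
  destruct (Rlt_le_dec (br c) (bl b)); [right; assumption |].
  exfalso; apply Hno; exists (Rmax (bl b) (bl c)).
  unfold Rmax; destruct (Rle_dec (bl b) (bl c)); lra.
Qed.

Lemma zero_visible_clear n B u v :
  k_visible vertical n (bar_shapes B) 0 u v -> bh (B u) < bh (B v) ->
  exists x, spans (B u) x /\ spans (B v) x /\
    forall w, (w < n)%nat -> bh (B u) < bh (B w) < bh (B v) -> ~ spans (B w) x.
Proof.
  intros [[x y1] [[x' y2] [[Hu Hy1] [[Hv Hy2] [Hx [S [HS Hblock]]]]]]] Huv.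
  unfold vertical in Hx; simpl in *; subst x' y1 y2.
  exists x; split; [exact Hu | split; [exact Hv |]].
  intros w Hw Hbetween Hxw; destruct S; [| simpl in HS; lia].
  apply (Hblock w Hw); try (intros ->; lra).
  apply meets_vertical_bar_intro; assumption.
Qed.

Lemma invisible_vertical_blocked n B k u v x S :
  pairwise_disjoint n (bar_shapes B) -> (u < n)%nat -> (v < n)%nat -> u <> v ->
  ~ k_visible vertical n (bar_shapes B) k u v ->
  spans (B u) x -> spans (B v) x -> (length S <= k)%nat ->
  exists w, (w < n)%nat /\ w <> u /\ w <> v /\ ~ In w S /\ spans (B w) x /\
    (bh (B u) < bh (B w) < bh (B v) \/ bh (B v) < bh (B w) < bh (B u)).
Proof.
  intros Hdisj Hu Hv Huv Hinvis Hxu Hxv HS.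
  apply NNPP; intros Hno; apply Hinvis.
  exists (x, bh (B u)), (x, bh (B v)).
  split; [split; [exact Hxu | reflexivity] |].
  split; [split; [exact Hxv | reflexivity] |].
  split; [reflexivity |].
  exists S; split; [exact HS |].
  intros w Hw Hwu Hwv Hm; apply meets_vertical_bar in Hm; destruct Hm as [Hxw Hbetween].
  apply NNPP; intros HwS; apply Hno; exists w.
  do 5 (split; [assumption |]).
  pose proof (disjoint_bars_heights n B w u x Hdisj Hw Hu Hwu Hxw Hxu).
  pose proof (disjoint_bars_heights n B w v x Hdisj Hw Hv Hwv Hxw Hxv).
  apply between_strict; assumption.
Qed.

Section SortByKey.

Variable f : nat -> R.

Local Notation lt_f := (fun x y => f x < f y).

Lemma insert_sorted_by_key x s :
  StronglySorted lt_f s -> (forall y, In y s -> f x <> f y) ->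
  exists s', Permutation (x :: s) s' /\ StronglySorted lt_f s'.
Proof.
  induction s as [| y s IH]; intros Hs Hx.
  - exists [x]; split; [reflexivity | repeat constructor].
  - apply StronglySorted_inv in Hs; destruct Hs as [Hs Hy].
    assert (Hxy : f x <> f y) by (apply Hx; left; reflexivity).
    destruct (Rtotal_order (f x) (f y)) as [Hlt | [Heq | Hgt]]; [| contradiction |].
    + exists (x :: y :: s); split; [reflexivity |].
      constructor; [constructor; assumption |].
      constructor; [exact Hlt |].
      eapply Forall_impl; [| exact Hy]; simpl; intros; lra.
    + destruct IH as [s' [Hperm Hs']]; [exact Hs | intros; apply Hx; right; assumption |].
      exists (y :: s'); split.
      * rewrite perm_swap; apply perm_skip, Hperm.
      * constructor; [exact Hs' |].
        apply (Permutation_Forall Hperm); constructor; [exact Hgt | exact Hy].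
Qed.

Lemma exists_sorted_by_key l :
  NoDup l -> (forall x y, In x l -> In y l -> x <> y -> f x <> f y) ->
  exists s, Permutation l s /\ StronglySorted lt_f s.
Proof.
  induction l as [| x l IH]; intros Hnd Hinj.
  - exists []; split; constructor.
  - apply NoDup_cons_iff in Hnd; destruct Hnd as [Hx Hnd].
    destruct IH as [s [Hperm Hs]]; [exact Hnd | intros; apply Hinj; simpl; auto |].
    destruct (insert_sorted_by_key x s Hs) as [s' [Hperm' Hs']].
    + intros y Hy; apply Hinj; [left | right | intros ->]; auto.
      * apply (Permutation_in _ (Permutation_sym Hperm)), Hy.
      * apply Hx, (Permutation_in _ (Permutation_sym Hperm)), Hy.
    + exists s'; split; [rewrite Hperm; exact Hperm' | exact Hs'].
Qed.

End SortByKey.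

Lemma five_stacked_bars_not_zero_visible n B a b c d e :
  (a < n)%nat -> (b < n)%nat -> (c < n)%nat -> (d < n)%nat -> (e < n)%nat ->
  bh (B a) < bh (B b) -> bh (B b) < bh (B c) -> bh (B c) < bh (B d) -> bh (B d) < bh (B e) ->
  (forall u v, (u < n)%nat -> (v < n)%nat -> bh (B u) < bh (B v) ->
     k_visible vertical n (bar_shapes B) 0 u v) ->
  False.
Proof.
  intros Ha Hb Hc Hd He Hab Hbc Hcd Hde Hvis.
  destruct (zero_visible_clear n B a c) as [x1 [Ha1 [Hc1 Hfree1]]]; [apply Hvis; auto; lra | lra |].
  destruct (zero_visible_clear n B b d) as [x2 [Hb2 [Hd2 Hfree2]]]; [apply Hvis; auto; lra | lra |].
  destruct (zero_visible_clear n B c e) as [x3 [Hc3 [He3 Hfree3]]]; [apply Hvis; auto; lra | lra |].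
  destruct (zero_visible_clear n B a d) as [x4 [Ha4 [Hd4 Hfree4]]]; [apply Hvis; auto; lra | lra |].
  destruct (zero_visible_clear n B b e) as [x5 [Hb5 [He5 Hfree5]]]; [apply Hvis; auto; lra | lra |].
  pose proof (Hfree1 b Hb (conj Hab Hbc)).
  pose proof (Hfree2 c Hc (conj Hbc Hcd)).
  pose proof (Hfree3 d Hd (conj Hcd Hde)).
  pose proof (Hfree4 b Hb (conj Hab (Rlt_trans _ _ _ Hbc Hcd))).
  pose proof (Hfree4 c Hc (conj (Rlt_trans _ _ _ Hab Hbc) Hcd)).
  pose proof (Hfree5 c Hc (conj Hbc (Rlt_trans _ _ _ Hcd Hde))).
  pose proof (Hfree5 d Hd (conj (Rlt_trans _ _ _ Hbc Hcd) Hde)).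
  destruct (k_visible_vertical_common_x n B 0 b c (Hvis b c Hb Hc Hbc)) as [y1 [Hb6 Hc6]].
  destruct (k_visible_vertical_common_x n B 0 c d (Hvis c d Hc Hd Hcd)) as [y2 [Hc7 Hd7]].
  unfold spans in *; lra.
Qed.

Lemma K5_not_bar_0_vis_graph : ~ bar_k_vis_graph 0 5 (fun _ _ => True).
Proof.
  intros [B [_ [Hdisj Hadj]]].
  assert (Hvis : forall u v, (u < 5)%nat -> (v < 5)%nat -> u <> v ->
            k_visible vertical 5 (bar_shapes B) 0 u v).
  { intros u v Hu Hv Huv; apply (Hadj u v Hu Hv Huv); exact I. }
  set (l := [0; 1; 2; 3; 4]%nat).
  assert (Hl : forall x, In x l -> (x < 5)%nat) by (simpl; intros; lia).
  destruct (exists_sorted_by_key (fun w => bh (B w)) l) as [s [Hperm Hs]].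
  - repeat constructor; simpl; lia.
  - intros u v Hu Hv Huv; apply Hl in Hu, Hv.
    destruct (k_visible_vertical_common_x _ _ _ _ _ (Hvis u v Hu Hv Huv)) as [x [Hxu Hxv]].
    exact (disjoint_bars_heights 5 B u v x Hdisj Hu Hv Huv Hxu Hxv).
  - assert (Hs5 : forall x, In x s -> (x < 5)%nat).
    { intros x Hx; apply Hl, (Permutation_in _ (Permutation_sym Hperm)), Hx. }
    apply Permutation_length in Hperm.
    destruct s as [| a [| b [| c [| d [| e [| ? ?]]]]]]; simpl in Hperm; try lia.
    apply StronglySorted_Sorted, Sorted_LocallySorted_iff in Hs.
    repeat match goal with H : LocallySorted _ (_ :: _ :: _) |- _ => inversion_clear H end.
    apply (five_stacked_bars_not_zero_visible 5 B a b c d e);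
      try (apply Hs5; simpl; tauto); try assumption.
    intros u v Hu Hv Huv; apply Hvis; auto; intros ->; lra.
Qed.

Lemma C4_not_bar_k_vis_graph k : (1 <= k)%nat -> ~ bar_k_vis_graph k 4 C4_adj.
Proof.
  intros Hk [B [Hval [Hdisj Hadj]]].
  assert (Hov : forall u v, (u < 4)%nat -> (v < 4)%nat -> C4_adj u v ->
            exists x, spans (B u) x /\ spans (B v) x).
  { intros u v Hu Hv Huv.
    assert (u <> v) by (intros ->; apply Huv; reflexivity).
    apply (k_visible_vertical_common_x 4 B k), (Hadj u v); auto. }
  (* Since [k >= 1], the list [[w1]] is admissible, so [w2] must block. *)
  assert (Hblock : forall u v w1 w2 x, (u < 4)%nat -> (v < 4)%nat -> u <> v ->
            Nat.even u = Nat.even v ->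
            (forall w, (w < 4)%nat -> w <> u -> w <> v -> w = w1 \/ w = w2) ->
            spans (B u) x -> spans (B v) x ->
            spans (B w2) x /\ (bh (B u) < bh (B w2) < bh (B v) \/ bh (B v) < bh (B w2) < bh (B u))).
  { intros u v w1 w2 x Hu Hv Huv Hpar Hothers Hxu Hxv.
    assert (Hinvis : ~ k_visible vertical 4 (bar_shapes B) k u v)
      by (intros Hvis; apply (Hadj u v Hu Hv Huv) in Hvis; contradiction).
    destruct (invisible_vertical_blocked 4 B k u v x [w1] Hdisj Hu Hv Huv Hinvis Hxu Hxv
                ltac:(simpl; lia)) as [w [Hw [Hwu [Hwv [Hw1 Hwx]]]]].
    destruct (Hothers w Hw Hwu Hwv) as [-> | ->]; [exfalso; apply Hw1; left |]; auto. }
  pose proof (fun w1 w2 x => Hblock 0 2 w1 w2 x ltac:(lia) ltac:(lia) ltac:(lia) eq_refl)%nat as Hblock02.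
  pose proof (fun w1 w2 x => Hblock 1 3 w1 w2 x ltac:(lia) ltac:(lia) ltac:(lia) eq_refl)%nat as Hblock13.
  destruct (classic (exists x, spans (B 0%nat) x /\ spans (B 2%nat) x)) as [[x [Hx0 Hx2]] | Hno02].
  - destruct (Hblock02 3 1 x ltac:(intros; lia) Hx0 Hx2)%nat as [Hx1 Hh1].
    destruct (Hblock02 1 3 x ltac:(intros; lia) Hx0 Hx2)%nat as [Hx3 Hh3].
    destruct (Hblock13 2 0 x ltac:(intros; lia) Hx1 Hx3)%nat as [_ Hh0].
    destruct (Hblock13 0 2 x ltac:(intros; lia) Hx1 Hx3)%nat as [_ Hh2].
    lra.
  - destruct (classic (exists x, spans (B 1%nat) x /\ spans (B 3%nat) x)) as [[x [Hx1 Hx3]] | Hno13].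
    + apply Hno02; exists x; split.
      * exact (proj1 (Hblock13 2 0 x ltac:(intros; lia) Hx1 Hx3))%nat.
      * exact (proj1 (Hblock13 0 2 x ltac:(intros; lia) Hx1 Hx3))%nat.
    + pose proof (bars_apart _ _ (Hval 0%nat ltac:(lia)) (Hval 2%nat ltac:(lia)) Hno02).
      pose proof (bars_apart _ _ (Hval 1%nat ltac:(lia)) (Hval 3%nat ltac:(lia)) Hno13).
      destruct (Hov 0 1 ltac:(lia) ltac:(lia) ltac:(discriminate))%nat as [y1 [? ?]].
      destruct (Hov 1 2 ltac:(lia) ltac:(lia) ltac:(discriminate))%nat as [y2 [? ?]].
      destruct (Hov 2 3 ltac:(lia) ltac:(lia) ltac:(discriminate))%nat as [y3 [? ?]].
      destruct (Hov 3 0 ltac:(lia) ltac:(lia) ltac:(discriminate))%nat as [y4 [? ?]].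
      unfold spans in *; lra.
Qed.

Theorem mainTheorem14 : forall i j : nat,
  exists (n : nat) (adj : nat -> nat -> Prop),
    arc_k_vis_graph j n adj /\ ~ bar_k_vis_graph i n adj.
Proof.
  intros [| i] j.
  - exists 5%nat, (fun _ _ => True).
    split; [apply K5_arc_k_vis_graph | apply K5_not_bar_0_vis_graph].
  - exists 4%nat, C4_adj.
    split; [apply C4_arc_k_vis_graph | apply C4_not_bar_k_vis_graph; lia].
Qed.
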